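(* Let $0<r_i<r_j$, let $g(\theta)=\dfrac{r_ir_j\sin\theta}{(r_i^2+r_j^2-2r_ir_j\cos\theta)^{3/2}}$, and let $\theta_{ij}\in(0,\pi)$ be defined by \[\cos\theta_{ij}=\frac{-r_i^2-r_j^2+\sqrt{r_i^4+14r_i^2r_j^2+r_j^4}}{2r_ir_j}\in(0,1).\] Then for $\theta\in[0,\pi]$: if $\cos\theta\in(\cos\theta_{ij},1)$ then \[ g'(\theta)< g'(0)\,\frac{\cos\theta-\cos\theta_{ij}}{1-\cos\theta_{ij}},\] and if $\cos\theta\in(-1,\cos\theta_{ij})$ then \[ g'(\theta)< g'(\pi)\,\frac{\cos\theta-\cos\theta_{ij}}{-1-\cos\theta_{ij}}.\] *)

From Stdlib Require Import Reals.
From Coquelicot Require Import Coquelicot.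
Open Scope R_scope.

Definition g (ri rj : R) (theta : R) : R :=
  ri * rj * sin theta / Rpower (ri ^ 2 + rj ^ 2 - 2 * ri * rj * cos theta) (3 / 2).

Definition cos_theta_ij (ri rj : R) : R :=
  (- ri ^ 2 - rj ^ 2 + sqrt (ri ^ 4 + 14 * ri ^ 2 * rj ^ 2 + rj ^ 4)) / (2 * ri * rj).

Definition theta_ij (ri rj : R) : R := acos (cos_theta_ij ri rj).

From Stdlib Require Import Reals Lra Psatz.
From Coquelicot Require Import Coquelicot.
Open Scope R_scope.

(* Write x = cos theta and D(x) = ri^2 + rj^2 - 2 ri rj x, the
   squared distance between the two points.  Differentiating g gives
     g'(theta) = ri rj P(x) / D(x)^(5/2),
     P(x) = ri rj x^2 + (ri^2 + rj^2) x - 3 ri rj,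
   and cos theta_ij is exactly the root c0 of P lying in (0,1).  The other
   root c1 = -(ri^2+rj^2)/(ri rj) - c0 is below -1, so
     g'(theta) = (x - c0) h(x),   h(x) = (ri rj)^2 (x - c1) / D(x)^(5/2),
   where h is positive and strictly increasing on [-1,1] (numerator grows,
   denominator shrinks).  Both inequalities follow: on (c0,1) multiply
   h(x) < h(1) by x - c0 > 0, on (-1,c0) multiply h(-1) < h(x) by x - c0 < 0,
   and recognise g'(0) = (1 - c0) h(1), g'(pi) = (-1 - c0) h(-1). *)

Lemma quadratic_factor (p q r c0 x : R) :
  p <> 0 -> p * c0 ^ 2 + q * c0 + r = 0 ->
  p * x ^ 2 + q * x + r = p * (x - c0) * (x - (- q / p - c0)).
Proof.
  intros Hp Hroot.
  apply Rminus_diag_uniq.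
  replace (p * x ^ 2 + q * x + r - p * (x - c0) * (x - (- q / p - c0)))
    with (p * c0 ^ 2 + q * c0 + r) by (field; exact Hp).
  exact Hroot.
Qed.

Section DerivativeOfG.

Variables a b : R.
Hypothesis Ha : 0 < a.
Hypothesis Hab : a < b.

Definition dist2 (x : R) : R := a ^ 2 + b ^ 2 - 2 * a * b * x.

Definition dist2_pow52 (x : R) : R := dist2 x ^ 2 * sqrt (dist2 x).

Definition slope_poly (x : R) : R := a * b * x ^ 2 + (a ^ 2 + b ^ 2) * x - 3 * a * b.

Lemma ab_pos : 0 < a * b.
Proof. nra. Qed.

(* Since a <> b, the distance never vanishes for x <= 1. *)
Lemma dist2_pos (x : R) : x <= 1 -> 0 < dist2 x.
Proof. intros Hx. unfold dist2. pose proof ab_pos. nra. Qed.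

Lemma dist2_pow52_pos (x : R) : x <= 1 -> 0 < dist2_pow52 x.
Proof.
  intros Hx. pose proof (dist2_pos x Hx).
  unfold dist2_pow52. apply Rmult_lt_0_compat; [nra | apply sqrt_lt_R0; lra].
Qed.

Lemma dist2_cos_pos (t : R) : 0 < dist2 (cos t).
Proof. apply dist2_pos, COS_bound. Qed.

(* Rpower with exponent 3/2 rewritten algebraically, so that it can be differentiated. *)
Lemma g_sqrt_form (t : R) :
  g a b t = a * b * sin t / (dist2 (cos t) * sqrt (dist2 (cos t))).
Proof.
  unfold g. fold (dist2 (cos t)).
  replace (3 / 2) with (1 + / 2) by field.
  rewrite Rpower_plus, Rpower_1, Rpower_sqrt; auto using dist2_cos_pos.
Qed.

Lemma Derive_g (t : R) :
  Derive (g a b) t = a * b * slope_poly (cos t) / dist2_pow52 (cos t).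
Proof.
  rewrite (Derive_ext _ (fun t => a * b * sin t / (dist2 (cos t) * sqrt (dist2 (cos t)))))
    by (intros; apply g_sqrt_form).
  apply is_derive_unique.
  pose proof (dist2_cos_pos t) as HD.
  pose proof (sqrt_lt_R0 _ HD) as HS.
  pose proof (sqrt_sqrt _ (Rlt_le _ _ HD)) as HSS.
  pose proof (sin2_cos2 t) as Hpyth. unfold Rsqr in Hpyth.
  unfold slope_poly, dist2_pow52, dist2 in *.
  auto_derive;
    replace (a * (a * 1) + b * (b * 1) + - (2 * a * b * cos t))
      with (a ^ 2 + b ^ 2 - 2 * a * b * cos t) by ring;
    set (S := sqrt _) in *;
    set (D := a ^ 2 + b ^ 2 - 2 * a * b * cos t) in *.
  - repeat split; [lra | apply Rmult_integral_contrapositive_currified; lra].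
  - assert (HDe : D = a ^ 2 + b ^ 2 - 2 * a * b * cos t) by reflexivity.
    clearbody S D.
    (* quotient rule gives a b (D cos t - 3 a b sin^2 t) / D^(5/2); then sin^2 = 1 - cos^2 *)
    transitivity (a * b * (cos t * D - 3 * a * b * sin t ^ 2) / (D ^ 2 * S)).
    + rewrite <- HSS. field. lra.
    + replace (sin t ^ 2) with (1 - cos t ^ 2) by nra.
      rewrite HDe at 1. field. lra.
Qed.

End DerivativeOfG.

Section CriticalCosine.

Variables a b : R.
Hypothesis Ha : 0 < a.
Hypothesis Hab : a < b.

Lemma cos_theta_ij_root :
  0 < cos_theta_ij a b < 1 /\ slope_poly a b (cos_theta_ij a b) = 0.
Proof.
  pose proof (ab_pos a b Ha Hab) as Hab0.
  unfold slope_poly, cos_theta_ij.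
  set (S := sqrt _).
  assert (HSS : S * S = a ^ 4 + 14 * a ^ 2 * b ^ 2 + b ^ 4) by (apply sqrt_sqrt; nra).
  assert (HSp : 0 <= S) by apply sqrt_pos.
  assert (HS_lo : a ^ 2 + b ^ 2 < S) by nra.
  assert (HS_hi : S < a ^ 2 + b ^ 2 + 2 * a * b).
  { assert (0 < a * b * ((b - a) * (b - a))) by (apply Rmult_lt_0_compat; nra). nra. }
  split; [split|].
  - apply Rdiv_lt_0_compat; lra.
  - apply Rlt_div_l; lra.
  - field_simplify; [|lra].
    replace (S ^ 2) with (S * S) by ring. rewrite HSS. unfold Rdiv. ring.
Qed.

Definition other_root : R := - (a ^ 2 + b ^ 2) / (a * b) - cos_theta_ij a b.

Lemma slope_poly_factor (x : R) :
  slope_poly a b x = a * b * (x - cos_theta_ij a b) * (x - other_root).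
Proof.
  pose proof (ab_pos a b Ha Hab). destruct cos_theta_ij_root as [_ Hroot].
  unfold slope_poly, Rminus in *.
  apply quadratic_factor; [lra | exact Hroot].
Qed.

Lemma other_root_lt_m1 : other_root < -1.
Proof.
  pose proof (ab_pos a b Ha Hab) as Hab0.
  destruct cos_theta_ij_root as [[H0 _] _].
  assert (2 <= (a ^ 2 + b ^ 2) / (a * b)) by (apply Rle_div_r; nra).
  unfold other_root. lra.
Qed.

(* The slope ratio h(x) = g'/(x - c0); positive and increasing on [-1,1]. *)
Definition slope_ratio (x : R) : R := a * b * (a * b * (x - other_root)) / dist2_pow52 a b x.

Lemma dist2_pow52_decr (x y : R) :
  x < y -> y <= 1 -> 0 < dist2_pow52 a b y < dist2_pow52 a b x.
Proof.
  intros Hxy Hy. pose proof (ab_pos a b Ha Hab).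
  assert (Hy0 : 0 < dist2 a b y) by (apply dist2_pos; auto).
  assert (Hlt : dist2 a b y < dist2 a b x) by (unfold dist2; nra).
  assert (0 < sqrt (dist2 a b y) < sqrt (dist2 a b x))
    by (split; [apply sqrt_lt_R0 | apply sqrt_lt_1]; lra).
  assert (0 < dist2 a b y ^ 2 < dist2 a b x ^ 2) by (split; nra).
  unfold dist2_pow52. split; nra.
Qed.

Lemma slope_ratio_incr (x y : R) :
  -1 <= x -> x < y -> y <= 1 -> slope_ratio x < slope_ratio y.
Proof.
  intros Hx Hxy Hy. pose proof (ab_pos a b Ha Hab). pose proof other_root_lt_m1.
  destruct (dist2_pow52_decr x y Hxy Hy) as [Hqy Hqyx].
  unfold slope_ratio, Rdiv.
  assert (0 < / dist2_pow52 a b x < / dist2_pow52 a b y)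
    by (split; [apply Rinv_0_lt_compat | apply Rinv_lt_contravar]; nra).
  assert (0 < a * b * (a * b * (x - other_root)) < a * b * (a * b * (y - other_root)))
    by (split; apply Rmult_lt_compat_l || apply Rmult_lt_0_compat; nra).
  nra.
Qed.

Lemma Derive_g_factor (t : R) :
  Derive (g a b) t = (cos t - cos_theta_ij a b) * slope_ratio (cos t).
Proof.
  pose proof (ab_pos a b Ha Hab).
  pose proof (dist2_pow52_pos a b Ha Hab (cos t) (proj2 (COS_bound t))).
  rewrite Derive_g, slope_poly_factor by auto.
  unfold slope_ratio. field. lra.
Qed.

End CriticalCosine.

Theorem lemma2p4 (ri rj theta : R) :
  0 < ri -> ri < rj -> 0 <= theta <= PI ->
  (cos (theta_ij ri rj) < cos theta < 1 ->
     Derive (g ri rj) theta <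
       Derive (g ri rj) 0 * ((cos theta - cos (theta_ij ri rj)) / (1 - cos (theta_ij ri rj)))) /\
  (-1 < cos theta < cos (theta_ij ri rj) ->
     Derive (g ri rj) theta <
       Derive (g ri rj) PI * ((cos theta - cos (theta_ij ri rj)) / (-1 - cos (theta_ij ri rj)))).
Proof.
  intros Hi Hij _.
  destruct (cos_theta_ij_root ri rj Hi Hij) as [[Hc0 Hc1] _].
  unfold theta_ij. rewrite cos_acos by lra.
  rewrite !(Derive_g_factor ri rj Hi Hij), cos_0, cos_PI.
  split; intros Hc.
  - (* c0 < x < 1:  (x - c0) h(x) < (x - c0) h(1) *)
    pose proof (slope_ratio_incr ri rj Hi Hij (cos theta) 1 ltac:(lra) ltac:(lra) ltac:(lra)).
    replace ((1 - cos_theta_ij ri rj) * slope_ratio ri rj 1 *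
               ((cos theta - cos_theta_ij ri rj) / (1 - cos_theta_ij ri rj)))
      with ((cos theta - cos_theta_ij ri rj) * slope_ratio ri rj 1) by (field; lra).
    apply Rmult_lt_compat_l; lra.
  - (* -1 < x < c0:  (x - c0) h(x) < (x - c0) h(-1), as x - c0 < 0 *)
    pose proof (slope_ratio_incr ri rj Hi Hij (-1) (cos theta) ltac:(lra) ltac:(lra) ltac:(lra)).
    replace ((-1 - cos_theta_ij ri rj) * slope_ratio ri rj (-1) *
               ((cos theta - cos_theta_ij ri rj) / (-1 - cos_theta_ij ri rj)))
      with ((cos theta - cos_theta_ij ri rj) * slope_ratio ri rj (-1)) by (field; lra).
    nra.
Qed.
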